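(* Let $\lambda,s\in\mathbb{C}$ be parameters and consider sequences $(x_n,y_n)$ satisfying the recurrence $$x_n x_{n+1}=\frac{n-y_n}{2y_n^2+2\lambda y_n},\qquad y_n+y_{n-1}=-\frac{2\lambda x_n^2-s x_n-1}{2x_n^2}.$$ This recurrence is equivalent to the discrete Painlevé equation $$\overline{q}+q=p-t-\frac{a_2}{p},\qquad p+\underline{p}=q+t+\frac{a_1}{q},$$ with root variables $a_0,a_1,a_2$ satisfying $a_0+a_1+a_2=1$ and evolving under the step $n\mapsto n+1$ as $\overline{a}_0=a_0$, $\overline{a}_1=a_1-1$, $\overline{a}_2=a_2+1$. The equivalence is given by the change of variables $$x(q,p)=\frac{q}{\sqrt{2}\,(a_1-qp)},\qquad y(q,p)=qp-a_1,\qquad s(t)=\sqrt{2}\,t,$$ with inverse $$q(x,y)=-\sqrt{2}\,xy,\qquad p(x,y)=\frac{n-y}{\sqrt{2}\,xy},\qquad t(s)=\frac{s}{\sqrt{2}},$$ and the parameters are related by $$a_0=1-\lambda,\qquad a_1=-n,\qquad a_2=n+\lambda.$$ That is, setting $q_n=-\sqrt2 x_ny_n$, $p_n=\frac{n-y_n}{\sqrt2 x_ny_n}$, $t=s/\sqrt2$, the pair $(x_n,y_n)$ satisfies the recurrence above if and only if $q_{n+1}+q_n=p_n-t-\frac{n+\lambda}{p_n}$ and $p_n+p_{n-1}=q_n+t-\frac{n}{q_n}$ (whenever all expressions are defined).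
   Context: Here $\overline{q},\underline{p}$ denote the values of $q$ at step $n+1$ and of $p$ at step $n-1$ respectively, while $q,p,a_1,a_2$ are taken at step $n$. Origin of the recurrence: for the weight $w(x)=x^\lambda e^{-x^2+sx}$ on $(0,\infty)$ ($\lambda>-1$, $s\in\mathbb{R}$), with ladder-operator quantities $R_n(s)$, $r_n(s)$, one sets $x_n=1/R_{n-1}(s)$ and $y_n=-r_n(s)$; the theorem itself concerns only the displayed recurrence. The target system is the standard discrete Painlevé equation of type d-$\mathrm{P}(A_2^{(1)}/E_6^{(1)})$ in the normalization of Kajiwara–Noumi–Yamada. *)

(* The paper works over the complex numbers; we state the
   (purely algebraic) result over an arbitrary numeric algebraically closed
   field C (this includes the complex numbers, e.g. R[i] for R : rcfType). *)
From HB Require Import structures.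
From mathcomp Require Import all_boot all_order all_algebra.
Set Implicit Arguments.
Unset Strict Implicit.
Unset Printing Implicit Defensive.
Import Order.TTheory GRing.Theory Num.Theory.
Local Open Scope ring_scope.

Section DefsSec.
Variable C : numClosedFieldType.

Definition a0 (lam : C) (n : nat) : C := 1 - lam.
Definition a1 (n : nat) : C := - (n%:R).
Definition a2 (lam : C) (n : nat) : C := n%:R + lam.

Definition qv (x y : nat -> C) (n : nat) : C := - sqrtC 2 * x n * y n.
Definition pv (x y : nat -> C) (n : nat) : C :=
  (n%:R - y n) / (sqrtC 2 * x n * y n).
Definition tv (s : C) : C := s / sqrtC 2.

Definition rec1 (lam : C) (x y : nat -> C) (n : nat) : Prop :=
  x n * x n.+1 = (n%:R - y n) / (2 * y n ^+ 2 + 2 * lam * y n).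
(* second equation at step n+1 (it involves y_{n}, i.e. index n-1 at n+1) *)
Definition rec2 (lam s : C) (x y : nat -> C) (n : nat) : Prop :=
  y n.+1 + y n = - ((2 * lam * x n.+1 ^+ 2 - s * x n.+1 - 1) / (2 * x n.+1 ^+ 2)).

Definition dP1 (lam s : C) (x y : nat -> C) (n : nat) : Prop :=
  qv x y n.+1 + qv x y n = pv x y n - tv s - a2 lam n / pv x y n.
Definition dP2 (s : C) (x y : nat -> C) (n : nat) : Prop :=
  pv x y n.+1 + pv x y n = qv x y n.+1 + tv s + a1 n.+1 / qv x y n.+1.

End DefsSec.

From HB Require Import structures.
From mathcomp Require Import all_boot all_order all_algebra.
From mathcomp Require Import ring.
Import Order.TTheory GRing.Theory Num.Theory.
Local Open Scope ring_scope.

(* Both systems only ever relate (x_n, y_n) to (x_{n+1}, y_{n+1}), so it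
   suffices to compare them one step at a time.  Put w = y_n + lam,
   R = sqrt2 x_{n+1} w and u = q_{n+1} + t; since q_n p_n = y_n - n, clearing
   denominators turns the two recurrences into p_n = R and R = u + w / R, and
   the two d-Painleve equations into u = p_n - w / p_n and p_n = u + w / R.
   These two systems are equivalent: one way by substituting p_n = R, the
   other because together they give w / p_n = w / R, i.e. p_n = R. *)

Lemma scaled_eqP (F : fieldType) (k a b c d : F) :
  k != 0 -> a - b = k * (c - d) -> a = b <-> c = d.
Proof.
move=> k_neq0 e; split=> [ab | cd]; last by apply/subr0_eq; rewrite e cd subrr mulr0.
apply/eqP; move: e; rewrite ab subrr => /esym/eqP.
by rewrite mulf_eq0 (negbTE k_neq0) subr_eq0.
Qed.

Lemma solved_system_iff (F : fieldType) (p R u w : F) : w != 0 ->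
  (p = R /\ R = u + w / R) <-> (u = p - w / p /\ p = u + w / R).
Proof.
move=> w_neq0; split=> [[-> e] | [e1 e2]].
  by split=> //; rewrite [X in X - _]e addrK.
have e : w / p = w / R by apply: (addrI u); rewrite -e2 e1 subrK.
have pR : p = R by apply/invr_inj/(mulfI w_neq0).
by split=> //; rewrite -[LHS]pR.
Qed.

Lemma forall_and_iff (I : Type) (A B C D : I -> Prop) :
  (forall i, A i /\ B i <-> C i /\ D i) ->
  (forall i, A i) /\ (forall i, B i) <-> (forall i, C i) /\ (forall i, D i).
Proof.
move=> equiv; split=> [[hA hB] | [hC hD]].
  have CD i := (equiv i).1 (conj (hA i) (hB i)).
  by split=> i; case: (CD i).
have AB i := (equiv i).2 (conj (hC i) (hD i)).
by split=> i; case: (AB i).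
Qed.

(* r stands for sqrt 2, N for n, and primed variables for step n + 1. *)
Section OneStep.
Variables (F : fieldType) (r lam s N X Y X' Y' : F).
Hypotheses (r2 : r ^+ 2 = 2) (r_neq0 : r != 0).
Hypotheses (X_neq0 : X != 0) (Y_neq0 : Y != 0) (X'_neq0 : X' != 0) (Y'_neq0 : Y' != 0).
Hypotheses (Ylam_neq0 : Y + lam != 0) (YN : Y != N).

Let NY_neq0 : N - Y != 0. Proof. by rewrite subr_eq0 eq_sym. Qed.
Let nonzero := (r_neq0, X_neq0, Y_neq0, X'_neq0, Y'_neq0, Ylam_neq0, NY_neq0).

Let p := (N - Y) / (r * X * Y).
Let q' := - r * X' * Y'.
Let u := q' + s / r.
Let R := r * X' * (Y + lam).

Lemma rec1_solved :
  X * X' = (N - Y) / (2 * Y ^+ 2 + 2 * lam * Y) <-> p = R.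
Proof.
have -> : 2 * Y ^+ 2 + 2 * lam * Y = r ^+ 2 * Y * (Y + lam) by rewrite r2; ring.
apply: (@scaled_eqP _ (- X / (r * (Y + lam)))).
  by rewrite mulf_neq0 ?oppr_eq0 ?invr_eq0 ?mulf_neq0.
by rewrite /p /R; field; rewrite !nonzero.
Qed.

Lemma rec2_solved :
  Y' + Y = - ((2 * lam * X' ^+ 2 - s * X' - 1) / (2 * X' ^+ 2)) <->
  R = u + (Y + lam) / R.
Proof.
rewrite -r2; apply: (@scaled_eqP _ (r * X')^-1); first by rewrite invr_eq0 mulf_neq0.
by rewrite /u /q' /R; field; rewrite !nonzero.
Qed.

Lemma dP1_solved :
  q' + - r * X * Y = p - s / r - (N + lam) / p <-> u = p - (Y + lam) / p.
Proof.
apply: (@scaled_eqP _ 1); first exact: oner_neq0.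
by rewrite /u /p; field; rewrite !nonzero.
Qed.

Lemma dP2_solved :
  (N + 1 - Y') / (r * X' * Y') + p = q' + s / r + - (N + 1) / q' <->
  p = u + (Y + lam) / R.
Proof.
apply: (@scaled_eqP _ 1); first exact: oner_neq0.
by rewrite /u /p /q' /R; field; rewrite oppr_eq0 !nonzero.
Qed.

Lemma dPainleve_step_iff :
  (X * X' = (N - Y) / (2 * Y ^+ 2 + 2 * lam * Y) /\
   Y' + Y = - ((2 * lam * X' ^+ 2 - s * X' - 1) / (2 * X' ^+ 2))) <->
  (q' + - r * X * Y = p - s / r - (N + lam) / p /\
   (N + 1 - Y') / (r * X' * Y') + p = q' + s / r + - (N + 1) / q').
Proof.
split=> [[/rec1_solved e1 /rec2_solved e2] | [/dP1_solved e1 /dP2_solved e2]].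
  have [d1 d2] := (@solved_system_iff _ p R u _ Ylam_neq0).1 (conj e1 e2).
  by split; [apply/dP1_solved | apply/dP2_solved].
have [d1 d2] := (@solved_system_iff _ p R u _ Ylam_neq0).2 (conj e1 e2).
by split; [apply/rec1_solved | apply/rec2_solved].
Qed.

End OneStep.

Theorem theorem1p1 (C : numClosedFieldType) (lam s : C) (x y : nat -> C)
  (hx : forall n, x n != 0) (hy : forall n, y n != 0)
  (hyl : forall n, y n + lam != 0) (hyn : forall n, y n != n%:R) :
  ((forall n, rec1 lam x y n) /\ (forall n, rec2 lam s x y n)) <->
  ((forall n, dP1 lam s x y n) /\ (forall n, dP2 s x y n)).
Proof.
have r2 : sqrtC (2 : C) ^+ 2 = 2 := sqrtCK 2.
have r_neq0 : sqrtC (2 : C) != 0 by rewrite sqrtC_eq0 pnatr_eq0.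
apply: forall_and_iff => n.
rewrite /rec1 /rec2 /dP1 /dP2 /qv /pv /tv /a1 /a2 -[n.+1%:R]natr1.
exact: dPainleve_step_iff.
Qed.
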